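(* Fix finite nonempty $A$, $\Omega$, a full-support prior $\mu_0$ on $\Omega$, and a finite $M$ with $|M|>\max\{|\Omega|,|A|\}$. There is a set of transparent environments of Lebesgue measure one in $[0,1]^{|A|(|\Omega|+1)}$ such that, for every environment in it, if cheap-talk Sender values randomization then commitment is valuable.
   Context: An environment $(u_S,u_R)$ with $u_S,u_R:A\times\Omega\to[0,1]$ is transparent if there is $v:A\to[0,1]$ with $u_S(a,\omega)=v(a)$ for all $a,\omega$; the set of transparent environments is identified with $[0,1]^{|A|(|\Omega|+1)}$ (coordinates $v$ and $u_R$). Messaging strategies $\sigma:\Omega\to\Delta M$, action strategies $\rho:M\to\Delta A$, $U_i(\sigma,\rho)=\sum_{\omega,m,a}\mu_0(\omega)\sigma(m|\omega)\rho(a|m)u_i(a,\omega)$. $(\sigma,\rho)$ is S-BR if $\sigma\in\arg\max_{\sigma'}U_S(\sigma',\rho)$ and R-BR if $\rho\in\arg\max_{\rho'}U_R(\sigma,\rho')$; a cheap-talk equilibrium is both. Persuasion payoff: max of $U_S$ over R-BR profiles; cheap-talk payoff: max over cheap-talk equilibria. Commitment is valuable if persuasion payoff > cheap-talk payoff. $\sigma$ is partitional if for every $\omega$ some $m$ has $\sigma(m|\omega)=1$. Partitional cheap-talk payoff: max of $U_S$ over cheap-talk equilibria with partitional $\sigma$. Cheap-talk Sender values randomization if cheap-talk payoff > partitional cheap-talk payoff. *)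

From mathcomp Require Import all_boot all_order all_algebra.
From mathcomp Require Import boolp classical_sets reals.
Set Implicit Arguments. Unset Strict Implicit. Unset Printing Implicit Defensive.
Import Order.TTheory GRing.Theory Num.Theory.
Local Open Scope ring_scope.
Local Open Scope classical_set_scope.

Section Game.
Variables (R : realType) (A Omega M : finType).

Definition is_distr (T : finType) (p : T -> R) : Prop :=
  (forall t, 0 <= p t) /\ \sum_(t : T) p t = 1.

Definition full_support_prior (mu0 : Omega -> R) : Prop :=
  is_distr mu0 /\ forall w, 0 < mu0 w.

Definition msg_strategy (sigma : Omega -> M -> R) : Prop :=
  forall w, is_distr (sigma w).

Definition act_strategy (rho : M -> A -> R) : Prop :=
  forall m, is_distr (rho m).

Definition payoff (mu0 : Omega -> R) (u : A -> Omega -> R)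
    (sigma : Omega -> M -> R) (rho : M -> A -> R) : R :=
  \sum_(w : Omega) \sum_(m : M) \sum_(a : A)
     mu0 w * sigma w m * rho m a * u a w.

Definition S_BR mu0 (uS : A -> Omega -> R) sigma rho : Prop :=
  forall sigma', msg_strategy sigma' ->
    payoff mu0 uS sigma' rho <= payoff mu0 uS sigma rho.

Definition R_BR mu0 (uR : A -> Omega -> R) sigma rho : Prop :=
  forall rho', act_strategy rho' ->
    payoff mu0 uR sigma rho' <= payoff mu0 uR sigma rho.

Definition cheap_talk_eq mu0 uS uR sigma rho : Prop :=
  msg_strategy sigma /\ act_strategy rho /\
  S_BR mu0 uS sigma rho /\ R_BR mu0 uR sigma rho.

Definition partitional (sigma : Omega -> M -> R) : Prop :=
  forall w, exists m, sigma w m = 1.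

(* persuasion payoff: max of U_S over R-BR profiles (the max is attained,
   so it equals the supremum) *)
Definition persuasion_payoff mu0 uS uR : R :=
  sup [set x | exists sigma rho, [/\ msg_strategy sigma, act_strategy rho,
         R_BR mu0 uR sigma rho & x = payoff mu0 uS sigma rho]].

Definition cheap_talk_payoff mu0 uS uR : R :=
  sup [set x | exists sigma rho, cheap_talk_eq mu0 uS uR sigma rho /\
         x = payoff mu0 uS sigma rho].

Definition partitional_cheap_talk_payoff mu0 uS uR : R :=
  sup [set x | exists sigma rho, [/\ cheap_talk_eq mu0 uS uR sigma rho,
         partitional sigma & x = payoff mu0 uS sigma rho]].

Definition commitment_valuable mu0 uS uR : Prop :=
  cheap_talk_payoff mu0 uS uR < persuasion_payoff mu0 uS uR.

Definition values_randomization mu0 uS uR : Prop :=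
  partitional_cheap_talk_payoff mu0 uS uR < cheap_talk_payoff mu0 uS uR.

(* Transparent environments, identified with points of R^(A x (Omega+1)):
   coordinate (a, None) is v a, coordinate (a, Some w) is u_R a w. *)
Definition env_index := (A * option Omega)%type.

Definition env_uS (x : env_index -> R) : A -> Omega -> R :=
  fun a _ => x (a, None).
Definition env_uR (x : env_index -> R) : A -> Omega -> R :=
  fun a w => x (a, Some w).

End Game.

(* Lebesgue measure on R^I (I finite): a set is Lebesgue-null iff for every
   eps > 0 it is covered by countably many closed boxes of total volume
   at most eps (Lebesgue outer measure zero). *)
Definition box_volume (R : realType) (I : finType) (lo hi : I -> R) : R :=
  \prod_(i : I) (hi i - lo i).

Definition lebesgue_null (R : realType) (I : finType) (N : set (I -> R)) : Prop :=
  forall eps : R, 0 < eps ->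
    exists lo hi : nat -> I -> R,
      (forall k i, lo k i <= hi k i) /\
      (forall x, N x -> exists k, forall i, lo k i <= x i <= hi k i) /\
      (forall n, \sum_(k < n) box_volume (lo k) (hi k) <= eps).

Definition unit_cube (R : realType) (I : finType) : set (I -> R) :=
  [set x | forall i, 0 <= x i <= 1].

Definition full_measure_in_cube (R : realType) (I : finType) (E : set (I -> R)) : Prop :=
  E `<=` @unit_cube R I /\ lebesgue_null (@unit_cube R I `\` E).

From mathcomp Require Import all_boot all_order all_algebra.
From mathcomp Require Import boolp classical_sets reals.
From mathcomp Require Import ring zify.
Import Order.TTheory GRing.Theory Num.Theory.
Set Implicit Arguments. Unset Strict Implicit. Unset Printing Implicit Defensive.
Local Open Scope ring_scope.
Local Open Scope classical_set_scope.

(* Call a transparent environment generic when Sender's values v a are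
   pairwise distinct: the other points of the cube lie on finitely many
   hyperplanes v a = v b and form a null set.  In a generic environment
   suppose the persuasion payoff is at most the cheap-talk payoff c.  As v
   takes finitely many values, some equilibrium pays more than every value of
   v below c.  By Sender's indifference each message it uses yields exactly
   that payoff, an average of v over Receiver's best replies, so the
   Sender-preferred best reply to it has value at least c.  Playing these
   replies is still optimal for Receiver, so it pays at most the persuasion
   payoff, hence at most c: every used message induces an action of value
   exactly c, by genericity one and the same action a.  Being a best reply to
   every used message, a is a best reply to the prior, and babbling with a is
   a partitional equilibrium paying c. *)

Lemma sum_eq_of_le (R : numDomainType) (T : finType) (F G : T -> R) :
  (forall t, F t <= G t) -> \sum_t G t <= \sum_t F t -> forall t, F t = G t.
Proof.
move=> FG GF t; have [le_FG eq_FG] := leif_sum (fun t (_ : true) => leif_eq (FG t)).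
have /forallP/(_ t)/eqP // : [forall t, F t == G t] by rewrite -eq_FG eq_le GF le_FG.
Qed.

Lemma finite_gap (R : realDomainType) (T : finType) (f : T -> R) (c : R) :
  exists2 t, t < c & forall x, f x < c -> f x <= t.
Proof.
exists (\big[Num.max/(c - 1)]_(x | f x < c) f x).
  apply: (big_ind (fun y => y < c)) => [|y z|//].
    by rewrite ltrBlDr ltrDl ltr01.
  by rewrite gt_max => -> ->.
by move=> x fx; rewrite (bigD1 x) //= le_max lexx.
Qed.

Section Expectation.
Variables (R : numDomainType) (T : finType).
Implicit Types (p f g : T -> R) (k : R).

Definition expect p f : R := \sum_t p t * f t.

Definition point_mass (t0 : T) : T -> R := fun t => (t == t0)%:R.

Lemma ler_expect p f g : (forall t, 0 <= p t) ->
  (forall t, 0 < p t -> f t <= g t) -> expect p f <= expect p g.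
Proof.
move=> p_ge0 fg; apply: ler_sum => t _.
have := p_ge0 t; rewrite le_eqVlt => /predU1P[<-|pt]; first by rewrite !mul0r.
by rewrite ler_wpM2l ?fg // ltW.
Qed.

Lemma expect_eq_support p f g : (forall t, 0 <= p t) ->
  (forall t, 0 < p t -> f t <= g t) -> expect p g <= expect p f ->
  forall t, 0 < p t -> f t = g t.
Proof.
move=> p_ge0 fg gf t pt.
have pfg u : p u * f u <= p u * g u.
  have := p_ge0 u; rewrite le_eqVlt => /predU1P[<-|pu]; first by rewrite !mul0r.
  by rewrite ler_wpM2l ?fg // ltW.
exact: (mulfI (lt0r_neq0 pt) (sum_eq_of_le pfg gf t)).
Qed.

Lemma expect_point_mass t0 f : expect (point_mass t0) f = f t0.
Proof.
rewrite /expect (bigD1 t0) //= big1 => [|t /negbTE]; rewrite /point_mass.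
  by rewrite eqxx mul1r addr0.
by move=> ->; rewrite mul0r.
Qed.

End Expectation.

Section Distributions.
Variables (R : realType) (T : finType).
Implicit Types (p f : T -> R) (k : R).

Lemma expect_cst p k : is_distr p -> expect p (fun=> k) = k.
Proof. by case=> _ p1; rewrite /expect -mulr_suml p1 mul1r. Qed.

Lemma expect_le_cst p f k : is_distr p ->
  (forall t, 0 < p t -> f t <= k) -> expect p f <= k.
Proof.
move=> pD fk; rewrite -[leRHS](expect_cst k pD).
by apply: ler_expect => //; case: pD.
Qed.

Lemma is_distr_point_mass (t0 : T) : is_distr (point_mass R t0).
Proof.
split=> [t|]; first by rewrite ler0n.
rewrite -(expect_point_mass t0 (fun=> 1 : R)) /expect.
by apply: eq_bigr => t _; rewrite mulr1.
Qed.

Lemma distr_support p : is_distr p -> exists t, 0 < p t.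
Proof.
case=> p_ge0 p1; apply/not_existsP => p_le0.
have p0 t : p t = 0 by apply/eqP; rewrite eq_le p_ge0 andbT leNgt; apply/negP/p_le0.
by move: p1; rewrite big1 // => /eqP; rewrite eq_sym oner_eq0.
Qed.

End Distributions.

Section Game.
Variables (R : realType) (A Omega M : finType) (mu0 : Omega -> R).
Hypothesis hmu0 : full_support_prior mu0.
Implicit Types (s : Omega -> M -> R) (r : M -> A -> R) (u : A -> Omega -> R).
Implicit Types (f g : M -> R) (k : R).

Definition expect_msg s g : R := expect mu0 (fun w => expect (s w) g).

Lemma expect_msg_cst s k : msg_strategy s -> expect_msg s (fun=> k) = k.
Proof.
move=> sS; rewrite /expect_msg (_ : (fun w => _) = fun=> k).
  by apply: expect_cst; case: hmu0.
by apply: funext => w; apply: expect_cst.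
Qed.

Lemma expect_msg_point_mass m0 g : expect_msg (fun=> point_mass R m0) g = g m0.
Proof. by rewrite /expect_msg expect_point_mass expect_cst //; case: hmu0. Qed.

Lemma expect_msg_le_cst s g k : msg_strategy s ->
  (forall w m, 0 < s w m -> g m <= k) -> expect_msg s g <= k.
Proof.
move=> sS gk; apply: expect_le_cst => [|w _]; first by case: hmu0.
exact: expect_le_cst (gk w).
Qed.

Lemma expect_msg_eq_support s f g : msg_strategy s ->
  (forall w m, 0 < s w m -> f m <= g m) -> expect_msg s g <= expect_msg s f ->
  forall w m, 0 < s w m -> f m = g m.
Proof.
move=> sS fg gf w; have [[mu_ge0 _] mu_gt0] := hmu0.
have inner_le w' : expect (s w') f <= expect (s w') g.
  by apply: ler_expect => [m|]; [case: (sS w') | exact: fg].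
apply: expect_eq_support => [m|m|]; first by case: (sS w).
  exact: fg.
by rewrite (expect_eq_support mu_ge0 (fun w' _ => inner_le w') gf (mu_gt0 w)).
Qed.

(* Receiver's posterior expected utility of [a] after [m], scaled by the
   probability of [m]. *)
Definition msg_util u s m a : R := \sum_w mu0 w * s w m * u a w.

Definition prior_util u a : R := \sum_w mu0 w * u a w.

Definition best_response u s m a : bool :=
  [forall b, msg_util u s m b <= msg_util u s m a].

Lemma payoff_by_msg u s r :
  payoff mu0 u s r = \sum_m expect (r m) (msg_util u s m).
Proof.
rewrite /payoff exchange_big; apply: eq_bigr => m _ /=.
rewrite /msg_util exchange_big /=; apply: eq_bigr => a _; rewrite mulr_sumr.
by apply: eq_bigr => w _; ring.
Qed.

Lemma sum_msg_util u s a : msg_strategy s ->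
  \sum_m msg_util u s m a = prior_util u a.
Proof.
move=> sS; rewrite /msg_util exchange_big; apply: eq_bigr => w _.
have [_ s1] := sS w.
by rewrite -[RHS]mul1r -s1 !mulr_suml; apply: eq_bigr => m _; ring.
Qed.

Lemma best_response_prior u s a : msg_strategy s ->
  (forall w m, 0 < s w m -> best_response u s m a) ->
  forall b, prior_util u b <= prior_util u a.
Proof.
move=> sS aBR b; rewrite -!(sum_msg_util _ _ sS); apply: ler_sum => m _.
have [[w swm]|unused] := pselect (exists w, 0 < s w m).
  exact: (forallP (aBR w m swm)).
have s0 w : s w m = 0.
  by have := proj1 (sS w) m; rewrite le_eqVlt => /predU1P[//|swm]; case: unused; exists w.
by rewrite /msg_util !big1 // => w _; rewrite s0 mulr0 mul0r.
Qed.

Lemma act_strategy_pure (f : M -> A) : act_strategy (fun m => point_mass R (f m)).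
Proof. by move=> m; apply: is_distr_point_mass. Qed.

Lemma R_BR_pure u s (f : M -> A) : (forall m, best_response u s m (f m)) ->
  R_BR mu0 u s (fun m => point_mass R (f m)).
Proof.
move=> fBR r' r'S; rewrite !payoff_by_msg; apply: ler_sum => m _.
rewrite expect_point_mass; apply: expect_le_cst => // a _.
exact: (forallP (fBR m)).
Qed.

Variable a0 : A.

Definition pure_best_response u s m : A := [arg max_(b > a0) msg_util u s m b]%O.

Lemma pure_best_responseP u s m : best_response u s m (pure_best_response u s m).
Proof.
rewrite /pure_best_response; case: arg_maxP => // a _ amax.
by apply/forallP => b; apply: amax.
Qed.

Lemma R_BR_support u s r m a : act_strategy r -> R_BR mu0 u s r ->
  0 < r m a -> best_response u s m a.
Proof.
move=> rS rBR rma; set b := pure_best_response u s.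
have b_best m' := forallP (pure_best_responseP u s m').
have le_b m' : expect (r m') (msg_util u s m') <= msg_util u s m' (b m').
  exact: expect_le_cst.
have := rBR _ (act_strategy_pure b); rewrite !payoff_by_msg.
under eq_bigr do rewrite expect_point_mass.
move/(sum_eq_of_le le_b)/(_ m) => eq_b.
have W_a : msg_util u s m a = msg_util u s m (b m).
  apply: (expect_eq_support (g := fun=> _) _ _ _ rma) => [a'|a' _|].
  - by case: (rS m).
  - exact: b_best.
  - by rewrite expect_cst // eq_b.
by apply/forallP => b'; rewrite W_a b_best.
Qed.

Section Transparent.
Variables (v : A -> R) (uR : A -> Omega -> R) (m0 : M).
Local Notation uS := (fun a (_ : Omega) => v a).

Lemma payoff_transparent s r :
  payoff mu0 uS s r = expect_msg s (fun m => expect (r m) v).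
Proof.
apply: eq_bigr => w _; rewrite /expect mulr_sumr; apply: eq_bigr => m _.
by rewrite !mulr_sumr; apply: eq_bigr => a _; ring.
Qed.

Lemma payoff_pure_act s (f : M -> A) :
  payoff mu0 uS s (fun m => point_mass R (f m)) = expect_msg s (fun m => v (f m)).
Proof.
rewrite payoff_transparent; congr expect_msg; apply: funext => m.
exact: expect_point_mass.
Qed.

Lemma payoff_transparent_le s r k : msg_strategy s -> act_strategy r ->
  (forall a, v a <= k) -> payoff mu0 uS s r <= k.
Proof.
move=> sS rS vk; rewrite payoff_transparent; apply: expect_msg_le_cst => // w m _.
exact: expect_le_cst.
Qed.

Lemma sender_indifference s r w m : cheap_talk_eq mu0 uS uR s r ->
  0 < s w m -> expect (r m) v = payoff mu0 uS s r.
Proof.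
case=> sS [_ [sBR _]] swm.
have dev m' : expect (r m') v <= payoff mu0 uS s r.
  have := sBR _ (fun=> is_distr_point_mass _ m').
  by rewrite payoff_transparent expect_msg_point_mass.
apply: (expect_msg_eq_support (f := fun m => expect (r m) v)
         (g := fun=> payoff mu0 uS s r) sS _ _ swm) => [w' m' _|]; first exact: dev.
by rewrite expect_msg_cst // payoff_transparent.
Qed.

Definition sender_preferred_response s m : A :=
  [arg max_(b > pure_best_response uR s m | best_response uR s m b) v b]%O.

Lemma sender_preferred_responseP s m :
  best_response uR s m (sender_preferred_response s m) /\
  forall b, best_response uR s m b -> v b <= v (sender_preferred_response s m).
Proof.
rewrite /sender_preferred_response; case: arg_maxP => [|a aBR amax]; last by split.
exact: pure_best_responseP.
Qed.

Lemma eq_payoff_le_sender_preferred s r w m : cheap_talk_eq mu0 uS uR s r ->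
  0 < s w m -> payoff mu0 uS s r <= v (sender_preferred_response s m).
Proof.
move=> eq_sr swm; rewrite -(sender_indifference eq_sr swm).
case: eq_sr => _ [rS [_ rBR]]; apply: expect_le_cst => // a rma.
exact: (proj2 (sender_preferred_responseP s m) a (R_BR_support rS rBR rma)).
Qed.

Lemma babbling_eq a : (forall b, prior_util uR b <= prior_util uR a) ->
  [/\ cheap_talk_eq mu0 uS uR (fun=> point_mass R m0) (fun=> point_mass R a),
      partitional (fun _ : Omega => point_mass R m0) &
      payoff mu0 uS (fun=> point_mass R m0) (fun=> point_mass R a) = v a].
Proof.
move=> a_prior.
have payoff_a s : msg_strategy s -> payoff mu0 uS s (fun=> point_mass R a) = v a.
  by move=> sS; rewrite (payoff_pure_act s (fun=> a)) expect_msg_cst.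
have m0S : msg_strategy (fun _ : Omega => point_mass R m0).
  by move=> w; apply: is_distr_point_mass.
have W_babble m b :
    msg_util uR (fun=> point_mass R m0) m b = (m == m0)%:R * prior_util uR b.
  by rewrite /msg_util /prior_util mulr_sumr; apply: eq_bigr => w _; ring.
split; last exact: payoff_a.
- split=> //; split; first exact: (act_strategy_pure (fun=> a)).
  split; first by move=> s' s'S; rewrite !payoff_a.
  apply: (R_BR_pure (f := fun=> a)) => m; apply/forallP => b.
  by rewrite !W_babble ler_wpM2l ?ler0n.
- by move=> w; exists m0; rewrite /point_mass eqxx.
Qed.

Definition v_max : R := v [arg max_(b > a0) v b]%O.

Lemma le_v_max a : v a <= v_max.
Proof. by rewrite /v_max; case: arg_maxP => // b _; apply. Qed.

Lemma le_persuasion_payoff s r : msg_strategy s -> act_strategy r ->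
  R_BR mu0 uR s r -> payoff mu0 uS s r <= persuasion_payoff M mu0 uS uR.
Proof.
move=> sS rS rBR; apply: sup_upper_bound; last by exists s, r.
split; first by exists (payoff mu0 uS s r), s, r.
by exists v_max => _ [s' [r' [s'S r'S _ ->]]]; apply: payoff_transparent_le le_v_max.
Qed.

Lemma le_partitional_payoff s r : cheap_talk_eq mu0 uS uR s r -> partitional s ->
  payoff mu0 uS s r <= partitional_cheap_talk_payoff M mu0 uS uR.
Proof.
move=> eq_sr sP; apply: sup_upper_bound; last by exists s, r.
split; first by exists (payoff mu0 uS s r), s, r.
exists v_max => _ [s' [r' [[s'S [r'S _]] _ ->]]].
exact: payoff_transparent_le le_v_max.
Qed.

Lemma cheap_talk_payoff_approx e : 0 < e -> exists s r,
  cheap_talk_eq mu0 uS uR s r /\ cheap_talk_payoff M mu0 uS uR - e < payoff mu0 uS s r.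
Proof.
move=> e_gt0; pose a := [arg max_(b > a0) prior_util uR b]%O.
have a_prior b : prior_util uR b <= prior_util uR a.
  by rewrite /a; case: arg_maxP => // a' _; apply.
have [babble _ _] := babbling_eq a_prior.
rewrite /cheap_talk_payoff; set CT := (X in sup X).
have CT_sup : has_sup CT.
  split; first by eexists; exists (fun=> point_mass R m0), (fun=> point_mass R a).
  exists v_max => _ [s' [r' [[s'S [r'S _]] ->]]].
  exact: payoff_transparent_le le_v_max.
have [_ [s [r [eq_sr ->]]] close] := sup_adherent e_gt0 CT_sup.
by exists s, r.
Qed.

Lemma sender_preferred_pooling s c : injective v -> msg_strategy s ->
  (forall w m, 0 < s w m -> c <= v (sender_preferred_response s m)) ->
  payoff mu0 uS s (fun m => point_mass R (sender_preferred_response s m)) <= c ->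
  exists2 a, (forall b, prior_util uR b <= prior_util uR a) & v a = c.
Proof.
move=> vI sS c_le le_c.
have v_eq w m : 0 < s w m -> v (sender_preferred_response s m) = c.
  move=> swm; apply/esym/(expect_msg_eq_support (f := fun=> c) sS c_le _ swm).
  by rewrite -payoff_pure_act expect_msg_cst.
have [w0 _] := distr_support (proj1 hmu0).
have [m1 s_m1] := distr_support (sS w0).
exists (sender_preferred_response s m1); last exact: v_eq s_m1.
apply: (best_response_prior sS) => w m swm.
have -> : sender_preferred_response s m1 = sender_preferred_response s m.
  by apply: vI; rewrite (v_eq _ _ s_m1) (v_eq _ _ swm).
exact: (proj1 (sender_preferred_responseP s m)).
Qed.

Lemma cheap_talk_payoff_le_partitional : injective v ->
  persuasion_payoff M mu0 uS uR <= cheap_talk_payoff M mu0 uS uR ->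
  cheap_talk_payoff M mu0 uS uR <= partitional_cheap_talk_payoff M mu0 uS uR.
Proof.
set c := cheap_talk_payoff _ _ _ _ => vI pers_le_c.
have [t t_lt_c gap] := finite_gap v c.
have [s [r [eq_sr]]] : exists s r, cheap_talk_eq mu0 uS uR s r /\ t < payoff mu0 uS s r.
  by rewrite -{1}(subKr c t); apply: cheap_talk_payoff_approx; rewrite subr_gt0.
move=> t_lt.
have c_le w m : 0 < s w m -> c <= v (sender_preferred_response s m).
  move=> swm; rewrite leNgt; apply/negP => /gap v_le_t.
  have := le_lt_trans (le_trans (eq_payoff_le_sender_preferred eq_sr swm) v_le_t) t_lt.
  by rewrite ltxx.
have [sS _] := eq_sr.
have sp_le_c :
    payoff mu0 uS s (fun m => point_mass R (sender_preferred_response s m)) <= c.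
  apply: le_trans pers_le_c; apply: le_persuasion_payoff => //.
    exact: act_strategy_pure.
  exact: R_BR_pure (fun m => proj1 (sender_preferred_responseP s m)).
have [a a_prior <-] := sender_preferred_pooling vI sS c_le sp_le_c.
have [babble babbleP <-] := babbling_eq a_prior.
exact: le_partitional_payoff babble babbleP.
Qed.

Lemma commitment_valuable_of_values_randomization : injective v ->
  values_randomization M mu0 uS uR -> commitment_valuable M mu0 uS uR.
Proof.
move=> vI; rewrite /values_randomization /commitment_valuable ltNge => /negP vr.
by rewrite ltNge; apply/negP => /(cheap_talk_payoff_le_partitional vI).
Qed.

End Transparent.
End Game.

Lemma lebesgue_null_sub (R : realType) (I : finType) (N1 N2 : set (I -> R)) :
  N1 `<=` N2 -> lebesgue_null N2 -> lebesgue_null N1.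
Proof.
move=> N12 N2null eps eps_gt0; have [lo [hi [lohi [cover vol]]]] := N2null eps eps_gt0.
by exists lo, hi; split=> //; split=> // x /N12; apply: cover.
Qed.

Lemma sum_indicator_lt (R : semiRingType) (N L : nat) :
  \sum_(k < N) (k < L)%:R = (minn N L)%:R :> R.
Proof.
elim: N => [|N IH]; first by rewrite big_ord0 min0n.
by rewrite big_ord_recr /= IH -natrD; congr _%:R; case: ltnP; lia.
Qed.

Lemma exists_slot (R : archiFieldType) (n : nat) (y : R) : (0 < n)%N ->
  0 <= y <= 1 -> exists2 t, (t < n)%N & t%:R / n%:R <= y <= t.+1%:R / n%:R.
Proof.
move=> n_gt0 /andP[y_ge0 y_le1]; have n_pos : 0 < n%:R :> R by rewrite ltr0n.
pose t0 := Num.truncn (y * n%:R).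
have /andP[t0_le t0_gt] := truncn_itv (mulr_ge0 y_ge0 (ltW n_pos)).
exists (minn t0 n.-1); first by lia.
rewrite ler_pdivrMr // ler_pdivlMr //; apply/andP; split.
  by apply: le_trans t0_le; rewrite ler_nat geq_minl.
case: leqP => _; first exact: ltW.
by rewrite prednK // -[leRHS]mul1r ler_wpM2r // ltW.
Qed.

Section Slabs.
Variables (R : realType) (I : finType) (i0 : I) (n : nat).

Definition offdiag : seq (I * I) := enum [pred p : I * I | p.1 != p.2].

Definition slab_pair k : I * I := nth (i0, i0) offdiag (k %/ n).

Definition in_slab k i : bool := (i == (slab_pair k).1) || (i == (slab_pair k).2).

(* For [k < size offdiag * n], box [k] is the product of the [k %% n]-th of [n]
   equal subintervals of [0, 1] in both coordinates of the pair [slab_pair k]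
   with [0, 1] in every other coordinate; later boxes are degenerate. *)
Definition slab_lo k i : R :=
  if (k < size offdiag * n)%N && in_slab k i then (k %% n)%:R / n%:R else 0.

Definition slab_hi k i : R :=
  if (k < size offdiag * n)%N then
    (if in_slab k i then (k %% n).+1%:R / n%:R else 1)
  else 0.

Lemma slab_lo_le_hi k i : slab_lo k i <= slab_hi k i.
Proof.
rewrite /slab_lo /slab_hi; case: (_ < _)%N => //=; case: in_slab => //=.
by rewrite ler_wpM2r ?invr_ge0 ?ler0n ?ler_nat.
Qed.

Lemma box_volume_slab k :
  box_volume (slab_lo k) (slab_hi k) = (k < size offdiag * n)%:R / n%:R ^+ 2.
Proof.
rewrite /box_volume /slab_lo /slab_hi; case: ltnP => /= [k_lt|_]; last first.
  by rewrite (bigD1 i0) //= subrr !mul0r.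
have n_gt0 : (0 < n)%N by move: k_lt; case: (n) => //; rewrite muln0.
set p := slab_pair k.
have : p \in offdiag by rewrite mem_nth // ltn_divLR.
rewrite mem_enum inE => p12.
have side : (k %% n).+1%:R / n%:R - (k %% n)%:R / n%:R = n%:R^-1 :> R.
  by rewrite -mulrBl -natrB // subSnn mul1r.
rewrite (bigD1 p.1) //= (bigD1 p.2) /=; last by rewrite eq_sym p12.
rewrite big1 => [|i /andP[i1 i2]]; last first.
  by rewrite /in_slab -/p (negbTE i1) (negbTE i2) subr0.
by rewrite /in_slab -/p !eqxx orbT /= side mulr1 mul1r expr2 invfM.
Qed.

Lemma slab_cover x i j : (0 < n)%N -> unit_cube x -> i != j -> x i = x j ->
  exists k, forall c, slab_lo k c <= x c <= slab_hi k c.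
Proof.
move=> n_gt0 x_cube ij xij.
have [t t_lt x_slot] := exists_slot n_gt0 (x_cube i).
have ij_offdiag : (i, j) \in offdiag by rewrite mem_enum.
pose q := index (i, j) offdiag.
have q_lt : (q < size offdiag)%N by rewrite index_mem.
exists (q * n + t)%N => c.
have div_k : ((q * n + t) %/ n = q)%N by rewrite divnMDl // divn_small // addn0.
have mod_k : ((q * n + t) %% n = t)%N by rewrite modnMDl modn_small.
have k_lt : (q * n + t < size offdiag * n)%N.
  apply: (@leq_trans (q.+1 * n)); first by rewrite mulSn addnC ltn_add2r.
  by rewrite leq_mul2r q_lt orbT.
rewrite /slab_lo /slab_hi /in_slab /slab_pair div_k nth_index // mod_k k_lt /=.
case: ifP => [/orP[]/eqP-> //|_]; last exact: x_cube.
by rewrite -xij.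
Qed.

End Slabs.

Lemma cube_coincidence_null (R : realType) (I : finType) (i0 : I) :
  lebesgue_null [set x : I -> R | unit_cube x /\ exists i j, i != j /\ x i = x j].
Proof.
move=> eps eps_gt0; pose P := size (offdiag I).
pose n := (Num.Def.archi_bound (P%:R / eps)).+1.
have n_gt0 : (0 < n)%N by [].
have n_pos : 0 < n%:R :> R by rewrite ltr0n.
have P_lt : P%:R / eps < n%:R.
  apply: lt_le_trans (archi_boundP _) _; last by rewrite ler_nat.
  by rewrite divr_ge0 ?ler0n ?ltW.
exists (slab_lo R i0 n), (slab_hi R i0 n); split; first exact: slab_lo_le_hi.
split=> [x [x_cube [i [j [ij xij]]]]|N]; first exact: slab_cover n_gt0 x_cube ij xij.
under eq_bigr do rewrite box_volume_slab.
rewrite -mulr_suml sum_indicator_lt.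
apply: (@le_trans _ _ ((P * n)%:R / n%:R ^+ 2)).
  by rewrite ler_wpM2r ?invr_ge0 ?exprn_ge0 ?ler0n // ler_nat geq_minr.
rewrite natrM expr2 invfM mulrA mulfK ?lt0r_neq0 //.
by rewrite ler_pdivrMr // mulrC -ler_pdivrMr // ltW.
Qed.

Theorem theorem5 (R : realType) (A Omega M : finType)
  (mu0 : Omega -> R)
  (hA : (0 < #|A|)%N) (hOmega : (0 < #|Omega|)%N)
  (hmu0 : full_support_prior mu0)
  (hM : (maxn #|Omega| #|A| < #|M|)%N) :
  exists E : set (env_index A Omega -> R),
    full_measure_in_cube E /\
    forall x, E x ->
      values_randomization M mu0 (env_uS x) (env_uR x) ->
      commitment_valuable M mu0 (env_uS x) (env_uR x).
Proof.
have [a0 _] := card_gt0P hA.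
have [m0 _] := card_gt0P (leq_ltn_trans (leq0n _) hM).
exists [set x | unit_cube x /\ injective (fun a => x (a, None))]; split; first split.
- by move=> x [].
- apply: lebesgue_null_sub (cube_coincidence_null (a0, None)) => x [x_cube x_notE].
  split=> //; apply: contra_notP x_notE => no_tie; split=> // a b xab.
  apply: contra_notP no_tie => ab; exists (a, None), (b, None); split=> //.
  by rewrite xpair_eqE andbT; apply/eqP.
- move=> x [_ vI].
  exact: (commitment_valuable_of_values_randomization (uR := env_uR x) hmu0 a0 m0 vI).
Qed.
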